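(* Let $\varepsilon\in[0,1)$ and $\mathcal{P},\mathcal{E}\subseteq\mathcal{D}(P)$. Then $$\beta\overline{W}_{\mathrm{GPO},\varepsilon}(\mathcal{P},\mathcal{E})=D_{\min,\varepsilon}(\mathcal{P}\|\mathcal{E}).$$
   Context: All Hilbert spaces are finite-dimensional; $\mathcal{D}(P)$ is the set of density operators on $P$; $T(X,Y)=\tfrac12\|X-Y\|_1$. Battery: qubit $B$ with basis $\{|0\rangle,|1\rangle\}$, $\pi_M=(1-\tfrac1M)|0\rangle\langle0|+\tfrac1M|1\rangle\langle1|$ for $M>1$, and $\Pi_M=\{\pi_{M'}:M'\in[M,\infty)\}$ (dirty battery $(|1\rangle\langle1|,\Pi_M)$). The one-shot extractable work into a dirty battery under a class $\mathfrak{F}$ is $\beta\overline{W}_{\mathfrak{F},\varepsilon}(\mathcal{P},\mathcal{E})=\log\sup\{M>1:\exists\mathcal{F}\in\mathfrak{F}\text{ with }T(\mathcal{F}(\rho),|1\rangle\langle1|)\le\varepsilon\ \forall\rho\in\mathcal{P}\text{ and }\mathcal{F}(\tau)\in\Pi_M\ \forall\tau\in\mathcal{E}\}$. GPO here means the class of CPTP maps, Gibbs preservation being the condition $\mathcal{F}(\tau)\in\Pi_M$. The smoothed min-relative entropy between sets is $D_{\min,\varepsilon}(\mathcal{P}\|\mathcal{E})=-\log\min\{\sup_{\tau\in\mathcal{E}}\operatorname{tr}[\tau E]:0\le E\le I,\ \sup_{\rho\in\mathcal{P}}\operatorname{tr}[\rho(I-E)]\le\varepsilon\}$, with $-\log 0=+\infty$.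 *)

From HB Require Import structures.
From mathcomp Require Import all_boot all_order all_algebra.
From mathcomp Require Import all_classical all_reals.
From mathcomp Require Import ereal exp.
From mathcomp Require Import complex mxtens.
Set Implicit Arguments. Unset Strict Implicit. Unset Printing Implicit Defensive.
Import Order.TTheory GRing.Theory Num.Theory.
Local Open Scope classical_set_scope.
Local Open Scope ring_scope.

Section QDefs.
Variable R : realType.
Local Notation C := R[i].

Definition adj m n (A : 'M[C]_(m, n)) : 'M[C]_(n, m) :=
  \matrix_(i, j) conjc (A j i).

Definition psd n (A : 'M[C]_n) : Prop :=
  adj A = A /\ forall v : 'cV[C]_n, (0 <= (adj v *m A *m v) ord0 ord0)%R.

(* density operators D(P), dim P = n *)
Definition density n (rho : 'M[C]_n) : Prop := psd rho /\ \tr rho = 1.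

Definition effect n (E : 'M[C]_n) : Prop := psd E /\ psd (1%:M - E).

Definition unitary n (U : 'M[C]_n) : Prop := adj U *m U = 1%:M.

(* Trace norm = sum of singular values.  [is_trnorm A t] : A has a singular
   value decomposition A = U diag(s) V^* with s >= 0 and t = sum_i s_i
   (the value t does not depend on the chosen decomposition). *)
Definition is_trnorm n (A : 'M[C]_n) (t : R) : Prop :=
  exists (U V : 'M[C]_n) (s : 'rV[R]_n),
    [/\ unitary U, unitary V, (forall i, 0 <= s ord0 i),
        A = U *m diag_mx (map_mx (real_complex R) s) *m adj V
      & t = \sum_i s ord0 i].

Definition trdist_le n (X Y : 'M[C]_n) (eps : R) : Prop :=
  exists t, is_trnorm (X - Y) t /\ t / 2 <= eps.

(* id_k (x) F applied to X : 'M_(k*n) (block decomposition along mxtens_index) *)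
Definition blk k n (X : 'M[C]_(k * n)) (i j : 'I_k) : 'M[C]_n :=
  \matrix_(a, b) X (mxtens_index (i, a)) (mxtens_index (j, b)).

Definition ampl k n m (F : 'M[C]_n -> 'M[C]_m) (X : 'M[C]_(k * n))
  : 'M[C]_(k * m) :=
  \matrix_(p, q) F (blk X (mxtens_unindex p).1 (mxtens_unindex q).1)
                    (mxtens_unindex p).2 (mxtens_unindex q).2.

Definition completely_positive n m (F : 'M[C]_n -> 'M[C]_m) : Prop :=
  forall k (X : 'M[C]_(k * n)), psd X -> psd (ampl F X).

Definition trace_preserving n m (F : 'M[C]_n -> 'M[C]_m) : Prop :=
  forall X, \tr (F X) = \tr X.

(* CPTP maps from P (dim n) to the battery qubit B *)
Definition CPTP n (F : {linear 'M[C]_n -> 'M[C]_2}) : Prop :=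
  completely_positive F /\ trace_preserving F.

Definition ket1 : 'M[C]_2 := delta_mx 1 1.
Definition piM (M : R) : 'M[C]_2 :=
  diag_mx (\row_(i < 2) real_complex R (if i == 0 then (1 - M^-1) else M^-1)).
Definition in_PiM (M : R) (X : 'M[C]_2) : Prop :=
  exists M', M <= M' /\ X = piM M'.

(* natural log extended to [0, +oo] (used only on values >= 1) *)
Definition lnE (x : \bar R) : \bar R :=
  if x is +oo%E then +oo%E else (ln (fine x))%:E.

Definition gpo_feasible n (Ps Es : set 'M[C]_n) (eps M : R) : Prop :=
  1 < M /\ exists F : {linear 'M[C]_n -> 'M[C]_2},
    [/\ CPTP F,
        (forall rho, Ps rho -> trdist_le (F rho) ket1 eps)
      & (forall tau, Es tau -> in_PiM M (F tau))].

(* beta W_{GPO,eps}(P,E) = log sup {M > 1 | feasible}; sup of the empty set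
   taken as 1 (infimum of the range M > 1), so the value is then 0. *)
Definition betaW_GPO n (Ps Es : set 'M[C]_n) (eps : R) : \bar R :=
  lnE (ereal_sup ([set 1%E] `|` [set (M%:E)%E | M in gpo_feasible Ps Es eps])).

(* sup_{tau in E} tr[tau E]; sup over an empty family taken as 0 *)
Definition supTr n (Es : set 'M[C]_n) (E : 'M[C]_n) : \bar R :=
  ereal_sup ([set 0%E] `|` [set ((complex.Re (\tr (tau *m E)))%:E)%E | tau in Es]).

Definition Dmin_feasible n (Ps : set 'M[C]_n) (eps : R) (E : 'M[C]_n) : Prop :=
  effect E /\ forall rho, Ps rho -> complex.Re (\tr (rho *m (1%:M - E))) <= eps.

Definition Dmin n (Ps Es : set 'M[C]_n) (eps : R) : \bar R :=
  let m := ereal_inf [set supTr Es E | E in Dmin_feasible Ps eps] in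
  if m == 0%E then +oo%E else (- ln (fine m))%:E.

End QDefs.

(* A CPTP map F into the battery induces the test E with tr (X E) = F(X)_11:
   T(F rho, |1><1|) <= eps forces tr (rho (I - E)) <= eps, and F tau = pi_M'
   with M' >= M forces tr (tau E) = 1/M' <= 1/M.  Conversely, a test E with
   tr (rho (I - E)) <= eps on P and sup_tau tr (tau E) = s < 1/M is realised by
   the measure-and-prepare channel X |-> diag (tr (X (I - A)), tr (X A)) for
   A = (1 - c) E + c I, c = 1/M - s, which sends each tau in E to
   pi_(1/tr (tau A)) with tr (tau A) <= 1/M.  Hence, with beta the optimal
   type-II error, every M > 1 with beta < 1/M is feasible and every feasible M
   has beta <= 1/M, so the supremum of the feasible M is 1/beta. *)

From HB Require Import structures.
From mathcomp Require Import all_boot all_order all_algebra.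
From mathcomp Require Import all_classical all_reals.
From mathcomp Require Import ereal exp.
From mathcomp Require Import complex mxtens.
From mathcomp Require Import spectral.
From mathcomp Require Import ring lra.
Set Implicit Arguments. Unset Strict Implicit. Unset Printing Implicit Defensive.
Import Order.TTheory GRing.Theory Num.Theory.
Local Open Scope classical_set_scope.
Local Open Scope ring_scope.

Section ComplexParts.
Variable R : realType.
Local Notation C := R[i].

Lemma Re_sum I (r : seq I) (P : pred I) (F : I -> C) :
  complex.Re (\sum_(i <- r | P i) F i) = \sum_(i <- r | P i) complex.Re (F i).
Proof. exact: (raddf_sum (@complex.Re R : Rcomplex R -> R)). Qed.

Lemma ge0_complex_real (z : C) : 0 <= z -> z = (complex.Re z)%:C%C.
Proof. by move=> /ger0_real /RRe_real. Qed.

End ComplexParts.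

Section Adjoint.
Variable R : realType.
Local Notation C := R[i].

Lemma adjD m n (A B : 'M[C]_(m, n)) : adj (A + B) = adj A + adj B.
Proof. by apply/matrixP => i j; rewrite !mxE rmorphD. Qed.

Lemma adjZ m n (x : C) (A : 'M[C]_(m, n)) : adj (x *: A) = conjc x *: adj A.
Proof. by apply/matrixP => i j; rewrite !mxE rmorphM. Qed.

Lemma adjK m n (A : 'M[C]_(m, n)) : adj (adj A) = A.
Proof. by apply/matrixP => i j; rewrite !mxE conjcK. Qed.

Lemma adj_mul m n p (A : 'M[C]_(m, n)) (B : 'M[C]_(n, p)) :
  adj (A *m B) = adj B *m adj A.
Proof.
apply/matrixP => i j; rewrite !mxE rmorph_sum; apply: eq_bigr => k _.
by rewrite !mxE rmorphM mulrC.
Qed.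

Lemma adj1 n : adj (1%:M : 'M[C]_n) = 1%:M.
Proof. by apply/matrixP => i j; rewrite !mxE eq_sym rmorph_nat. Qed.

Lemma adj_diag n (d : 'rV[C]_n) : adj (diag_mx d) = diag_mx (map_mx conjc d).
Proof. by apply/matrixP => i j; rewrite !mxE eq_sym rmorphMn; case: eqP => [->|]. Qed.

End Adjoint.

Section SesquilinearForm.
Variable R : realType.
Local Notation C := R[i].
Variable n : nat.
Implicit Types (A B : 'M[C]_n) (u v : 'cV[C]_n).

Definition sform A u v : C := (adj u *m A *m v) 0 0.

Lemma sformDl A u u' v : sform A (u + u') v = sform A u v + sform A u' v.
Proof. by rewrite /sform adjD !mulmxDl mxE. Qed.

Lemma sformDr A u v v' : sform A u (v + v') = sform A u v + sform A u v'.
Proof. by rewrite /sform mulmxDr mxE. Qed.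

Lemma sformZl A x u v : sform A (x *: u) v = conjc x * sform A u v.
Proof. by rewrite /sform adjZ -!scalemxAl mxE. Qed.

Lemma sformZr A x u v : sform A u (x *: v) = x * sform A u v.
Proof. by rewrite /sform -scalemxAr mxE. Qed.

Lemma sform_delta A c d : sform A (delta_mx c 0) (delta_mx d 0) = A c d.
Proof.
rewrite /sform !mxE (bigD1 d) //= big1 ?addr0; last first.
  by move=> k /negPf kd; rewrite !mxE kd mulr0.
rewrite !mxE eqxx mulr1 (bigD1 c) //= big1 ?addr0; last first.
  by move=> k /negPf kc; rewrite !mxE kc andFb conjc0 mul0r.
by rewrite !mxE !eqxx conjc1 mul1r.
Qed.

Lemma sform_sum A u v :
  sform A u v = \sum_p \sum_q conjc (u p 0) * A p q * v q 0.
Proof.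
rewrite /sform mxE exchange_big /=; apply: eq_bigr => q _.
by rewrite !mxE mulr_suml; apply: eq_bigr => p _; rewrite !mxE.
Qed.

Lemma sform_trace A u v : sform A u v = \tr (v *m adj u *m A).
Proof. by rewrite /sform -trace_mx11 mxtrace_mulC mulmxA. Qed.

Lemma sformD A B u v : sform (A + B) u v = sform A u v + sform B u v.
Proof. by rewrite /sform mulmxDr mulmxDl mxE. Qed.

Lemma sformZ x A u v : sform (x *: A) u v = x * sform A u v.
Proof. by rewrite /sform -scalemxAr -scalemxAl mxE. Qed.

Lemma sform_suml I (r : seq I) (P : pred I) (F : I -> 'M[C]_n) u v :
  sform (\sum_(i <- r | P i) F i) u v = \sum_(i <- r | P i) sform (F i) u v.
Proof.
apply: (big_morph (fun A => sform A u v)) => [A B|]; first exact: sformD.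
by rewrite /sform mulmx0 mul0mx mxE.
Qed.

Lemma sform_conj (M : 'M[C]_n) A k :
  sform A (adj M *m delta_mx k 0) (adj M *m delta_mx k 0) = (M *m A *m adj M) k k.
Proof. by rewrite -sform_delta /sform adj_mul adjK !mulmxA. Qed.

Lemma sform1_ge0 v : 0 <= sform 1%:M v v.
Proof.
rewrite /sform mulmx1 mxE; apply: sumr_ge0 => i _; rewrite !mxE mulrC.
exact: mulcJ_ge0.
Qed.

(* Over C, a nonnegative quadratic form is automatically Hermitian: polarize
   with [e_c + e_d] and [e_c + i e_d]. *)
Lemma psdP A : psd A <-> forall v, 0 <= sform A v v.
Proof.
split=> [[] //|hA]; split=> //; apply/matrixP => c d; rewrite mxE.
have Im0 v : complex.Im (sform A v v) = 0 by exact/ger0_Im/hA.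
have hc := Im0 (delta_mx c 0); have hd := Im0 (delta_mx d 0).
have h1 := Im0 (delta_mx c 0 + delta_mx d 0).
have h2 := Im0 (delta_mx c 0 + 'i%C *: delta_mx d 0).
rewrite !(sformDl, sformDr, sformZl, sformZr, sform_delta) in hc hd h1 h2.
move: hc hd h1 h2; case: (A c c) => a1 a2; case: (A d d) => b1 b2.
case: (A c d) => x1 x2; case: (A d c) => y1 y2 /= hc hd h1 h2.
congr Complex; lra.
Qed.

Lemma psd_diag_ge0 A c : psd A -> 0 <= A c c.
Proof. by case=> _ /(_ (delta_mx c 0)); rewrite -/(sform _ _ _) sform_delta. Qed.

Lemma psd_rank1 v : psd (v *m adj v).
Proof.
apply/psdP => u; rewrite /sform mulmxA -mulmxA mxE big_ord1.
have -> : adj v *m u = adj (adj u *m v) by rewrite adj_mul adjK.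
by rewrite [X in _ * X]mxE; exact: mulcJ_ge0.
Qed.

Lemma psdD A B : psd A -> psd B -> psd (A + B).
Proof. by rewrite !psdP => hA hB v; rewrite sformD addr_ge0. Qed.

Lemma psdZ (x : R) A : 0 <= x -> psd A -> psd (x%:C%C *: A).
Proof. by rewrite !psdP => x0 hA v; rewrite sformZ mulr_ge0 ?ler0c. Qed.

Lemma psd1 : psd (1%:M : 'M[C]_n).
Proof. exact/psdP/sform1_ge0. Qed.

Lemma effect_mix (E : 'M[C]_n) (c : R) : 0 <= c <= 1 -> effect E ->
  effect ((1 - c)%:C%C *: E + c%:C%C *: 1%:M).
Proof.
move=> /andP[c0 c1] [hE hIE]; have c1' : 0 <= 1 - c by rewrite subr_ge0.
split; first by apply: psdD; apply: psdZ => //; exact: psd1.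
have -> : 1%:M - ((1 - c)%:C%C *: E + c%:C%C *: 1%:M) = (1 - c)%:C%C *: (1%:M - E).
  apply/matrixP => i j; rewrite !mxE !rmorphB /=.
  by case: (i == j); rewrite ?mulr1n ?mulr0n; ring.
exact: psdZ.
Qed.

End SesquilinearForm.

Section PositiveTrace.
Variable R : realType.
Local Notation C := R[i].
Variable n : nat.

Lemma psd_factor (A : 'M[C]_n) : psd A ->
  exists (P : 'M[C]_n) (d : 'rV[C]_n),
    (forall k, 0 <= d 0 k) /\ A = adj P *m diag_mx d *m P.
Proof.
move=> [hA hq].
have tr_conj m p (B : 'M[C]_(m, p)) : map_mx Num.Def.conjC B^T = adj B.
  by apply/matrixP => i j; rewrite !mxE.
have nA : A \is normalmx by rewrite qualifE tr_conj hA.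
have /unitarymxP hU := spectral_unitarymx A; rewrite tr_conj in hU.
have eA := orthomx_spectralP nA.
rewrite invmx_unitary ?spectral_unitarymx // tr_conj in eA.
exists (spectralmx A), (spectral_diag A); split => // k.
have := hq (adj (spectralmx A) *m delta_mx k 0); rewrite -/(sform _ _ _).
by rewrite sform_conj {2}eA !mulmxA hU mul1mx -mulmxA hU mulmx1 mxE eqxx mulr1n.
Qed.

Lemma mxtrace_psd_mul_ge0 (A B : 'M[C]_n) : psd A -> psd B -> 0 <= \tr (A *m B).
Proof.
move=> /psd_factor [P [d [hd ->]]] [_ hB].
rewrite -!mulmxA mxtrace_mulC !mulmxA -!mulmxA mul_diag_mx /mxtrace.
apply: sumr_ge0 => k _; rewrite mxE; apply: mulr_ge0 => //.
by rewrite mulmxA -sform_conj; exact: hB.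
Qed.

Lemma mxtrace_psd_mul_real (A B : 'M[C]_n) : psd A -> psd B ->
  \tr (A *m B) = (complex.Re (\tr (A *m B)))%:C%C.
Proof. by move=> hA hB; exact/ge0_complex_real/mxtrace_psd_mul_ge0. Qed.

Lemma mxtrace_effect_density_le1 (A rho : 'M[C]_n) : effect A -> density rho ->
  complex.Re (\tr (A *m rho)) <= 1.
Proof.
move=> [hA h1A] [hrho tr1]; have := mxtrace_psd_mul_ge0 h1A hrho.
rewrite mulmxBl mul1mx mxtraceD raddfN /= tr1 (mxtrace_psd_mul_real hA hrho).
by rewrite -[1](rmorph1 (real_complex R)) -rmorphB ler0c subr_ge0.
Qed.

End PositiveTrace.

Section Amplification.
Variable R : realType.
Local Notation C := R[i].

Lemma big_mxtens_index k n (G : 'I_(k * n) -> C) :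
  \sum_p G p = \sum_i \sum_c G (mxtens_index (i, c)).
Proof.
rewrite pair_bigA /= (reindex (@mxtens_index k n)) /=.
  by apply: eq_bigr => -[i c].
by exists (@mxtens_unindex k n) => x _; rewrite ?mxtens_indexK ?mxtens_unindexK.
Qed.

Lemma blk_ampl k n m (F : 'M[C]_n -> 'M[C]_m) (X : 'M[C]_(k * n)) i j :
  blk (ampl F X) i j = F (blk X i j).
Proof. by apply/matrixP => a b; rewrite !mxE !mxtens_indexK. Qed.

Lemma sform_blk1 n (X : 'M[C]_(1 * n)) v :
  sform X v v = sform (blk X 0 0) (\col_c v (mxtens_index (0, c)) 0)
                                  (\col_c v (mxtens_index (0, c)) 0).
Proof.
rewrite !sform_sum big_mxtens_index big_ord1; apply: eq_bigr => c _.
rewrite big_mxtens_index big_ord1; apply: eq_bigr => d _.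
by rewrite !mxE.
Qed.

Lemma psd_blk1 n (X : 'M[C]_(1 * n)) : psd X <-> psd (blk X 0 0).
Proof.
rewrite !psdP; split=> hX w; last by rewrite sform_blk1.
have := hX (\col_p w (mxtens_unindex p).2 0); rewrite sform_blk1.
congr (_ <= sform _ _ _); apply/matrixP => c i;
  by rewrite !mxE mxtens_indexK ord1.
Qed.

Lemma cp_psd n m (F : 'M[C]_n -> 'M[C]_m) (Y : 'M[C]_n) :
  completely_positive F -> psd Y -> psd (F Y).
Proof.
move=> hF hY.
pose X : 'M[C]_(1 * n) :=
  \matrix_(p, q) Y (mxtens_unindex p).2 (mxtens_unindex q).2.
have XY : blk X 0 0 = Y by apply/matrixP => c d; rewrite !mxE !mxtens_indexK.
have /psd_blk1 : psd (ampl F X) by apply/hF/psd_blk1; rewrite XY.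
by rewrite blk_ampl XY.
Qed.

(* [x = w (x) u] turns the contracted block matrix into a compression of [X]. *)
Lemma psd_blk_contract k n (X : 'M[C]_(k * n)) (w : 'I_k -> C) :
  psd X -> psd (\sum_i \sum_j (conjc (w i) * w j) *: blk X i j).
Proof.
move=> [_ hX]; apply/psdP => u.
pose x : 'cV[C]_(k * n) :=
  \col_p (w (mxtens_unindex p).1 * u (mxtens_unindex p).2 0).
suff -> : sform (\sum_i \sum_j (conjc (w i) * w j) *: blk X i j) u u = sform X x x.
  exact: hX.
rewrite sform_suml sform_sum big_mxtens_index; apply: eq_bigr => i _.
rewrite sform_suml; under eq_bigr => j _ do rewrite sformZ sform_sum mulr_sumr.
rewrite exchange_big /=; apply: eq_bigr => c _.
rewrite big_mxtens_index; apply: eq_bigr => j _.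
rewrite mulr_sumr; apply: eq_bigr => d _.
rewrite !mxE !mxtens_indexK /= rmorphM; ring.
Qed.

End Amplification.

Section TraceNorm.
Variable R : realType.
Local Notation C := R[i].

Lemma is_trnorm_diag n (d : 'rV[R]_n) :
  is_trnorm (diag_mx (map_mx (real_complex R) d)) (\sum_i `|d 0 i|).
Proof.
pose sg i : C := (if 0 <= d 0 i then 1 else -1)%:C%C.
have sgK i : conjc (sg i) * sg i = 1.
  by rewrite /sg conjc_real; case: ifP => _; simpc.
have norm_sg i : (`|d 0 i|)%:C%C * conjc (sg i) = (d 0 i)%:C%C.
  rewrite /sg conjc_real -rmorphM; congr (_%:C)%C.
  by case: ifP => [/ger0_norm|/negbT]; rewrite ?mulr1 // -ltNge => /ltr0_norm ->;
    rewrite mulrN1 opprK.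
exists 1%:M, (diag_mx (\row_i sg i)), (map_mx Num.norm d); split.
- by rewrite /unitary adj1 mul1mx.
- rewrite /unitary adj_diag mul_diag_mx; apply/matrixP => i j.
  by rewrite !mxE; case: eqP => [->|]; rewrite ?mulr1n ?sgK ?mulr0n ?mulr0.
- by move=> i; rewrite mxE.
- rewrite mul1mx adj_diag mul_mx_diag; apply/matrixP => i j; rewrite !mxE.
  by case: eqP => [->|]; rewrite ?mulr0n ?mul0r // !mulr1n norm_sg.
- by apply: eq_bigr => i _; rewrite mxE.
Qed.

Lemma unitary_col_norm n (U : 'M[C]_n) j : unitary U ->
  \sum_i (complex.Re (U i j) ^+ 2 + complex.Im (U i j) ^+ 2) = 1.
Proof.
move=> /(congr1 (fun M : 'M[C]_n => complex.Re (M j j))); rewrite !mxE eqxx /=.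
by rewrite Re_sum => <-; apply: eq_bigr => i _; rewrite !mxE; case: (U i j) => a b /=; ring.
Qed.

(* Each singular value [s_j] contributes [s_j Re (U_0j V_0j^* - U_1j V_1j^* )],
   which is at most [s_j] because the columns of [U] and [V] are unit vectors. *)
Lemma is_trnorm_ge_diag_sub (D : 'M[C]_2) t : is_trnorm D t ->
  complex.Re (D 0 0 - D 1 1) <= t.
Proof.
move=> [U [V [s [hU hV hs -> ->]]]].
rewrite mul_mx_diag !mxE (raddfB (@complex.Re R : Rcomplex R -> R)) /=.
rewrite !Re_sum -sumrB; apply: ler_sum => j _; rewrite !mxE.
have := unitary_col_norm j hU; have := unitary_col_norm j hV.
rewrite !big_ord_recl !big_ord0 !addr0 (_ : lift 0 0 = 1); last exact: val_inj.
have := hs j; set s0 := s 0 j.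
case: (U 0 j) => [a b]; case: (U 1 j) => [c d].
case: (V 0 j) => [e f]; case: (V 1 j) => [g h] /= h1 h2 h3.
have : 0 <= s0 * ((a - e) ^+ 2 + (b - f) ^+ 2 + (c + g) ^+ 2 + (d + h) ^+ 2).
  by apply: mulr_ge0; rewrite ?addr_ge0 ?sqr_ge0.
nra.
Qed.

End TraceNorm.

Section MeasurePrepare.
Variable R : realType.
Local Notation C := R[i].
Variables (n : nat) (A : 'M[C]_n).

Definition outcome_effect (a : 'I_2) : 'M[C]_n := if a == 0 then 1%:M - A else A.

Definition measure_prepare (X : 'M[C]_n) : 'M[C]_2 :=
  diag_mx (\row_a \tr (outcome_effect a *m X)).

Lemma measure_prepare_is_linear : linear measure_prepare.
Proof.
move=> x X Y; apply/matrixP => a b; rewrite !mxE mulmxDr -scalemxAr.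
by rewrite mxtraceD mxtraceZ; case: (a == b); rewrite ?mulr1n ?mulr0n ?mulr0 ?addr0.
Qed.

HB.instance Definition _ :=
  GRing.isLinear.Build _ _ _ _ measure_prepare measure_prepare_is_linear.

Lemma measure_prepare_tp : trace_preserving measure_prepare.
Proof.
move=> X; rewrite mxtrace_diag big_ord_recl big_ord1 !mxE /outcome_effect /=.
by rewrite -mxtraceD -mulmxDl subrK mul1mx.
Qed.

Lemma measure_prepare_cp : effect A -> completely_positive measure_prepare.
Proof.
move=> [hA h1A] k X hX; apply/psdP => v.
pose w (a : 'I_2) (i : 'I_k) := v (mxtens_index (i, a)) 0.
suff -> : sform (ampl measure_prepare X) v v = \sum_a \tr (outcome_effect a *m
            \sum_i \sum_j (conjc (w a i) * w a j) *: blk X i j).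
  apply: sumr_ge0 => a _; apply: mxtrace_psd_mul_ge0; last exact: psd_blk_contract.
  by rewrite /outcome_effect; case: (a == 0).
rewrite sform_sum big_mxtens_index exchange_big /=; apply: eq_bigr => a _.
rewrite mulmx_sumr raddf_sum /=; apply: eq_bigr => i _.
rewrite mulmx_sumr raddf_sum big_mxtens_index /=; apply: eq_bigr => j _.
rewrite (bigD1 a) //= big1 ?addr0 => [|b /negPf ba]; last first.
  by rewrite !mxE !mxtens_indexK /= eq_sym ba mulr0n mulr0 mul0r.
by rewrite -scalemxAr mxtraceZ !mxE !mxtens_indexK /= eqxx mulr1n mulrAC.
Qed.

Lemma measure_prepare_cptp : effect A -> CPTP measure_prepare.
Proof. by move=> hA; split; [exact: measure_prepare_cp | exact: measure_prepare_tp]. Qed.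

Lemma measure_prepare_density (rho : 'M[C]_n) : effect A -> density rho ->
  let r := complex.Re (\tr (A *m rho)) in
  measure_prepare rho = diag_mx (\row_a (if a == 0 then 1 - r else r)%:C%C).
Proof.
move=> [hA _] [hrho tr1] r; congr diag_mx; apply/rowP => a; rewrite !mxE.
rewrite /outcome_effect; case: ifP => _; last exact: mxtrace_psd_mul_real.
by rewrite mulmxBl mul1mx mxtraceD raddfN /= tr1 (mxtrace_psd_mul_real hA hrho) rmorphB.
Qed.

Lemma measure_prepare_trdist (rho : 'M[C]_n) (eps : R) : effect A -> density rho ->
  1 - complex.Re (\tr (A *m rho)) <= eps -> trdist_le (measure_prepare rho) (ket1 R) eps.
Proof.
move=> hA hrho; have r1 := mxtrace_effect_density_le1 hA hrho.
have /= -> := measure_prepare_density hA hrho.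
set r := complex.Re _ in r1 * => r_eps.
exists (`|1 - r| + `|r - 1|); split; last first.
  by rewrite (distrC r) ger0_norm ?subr_ge0 //; lra.
have -> : diag_mx (\row_a (if a == 0 then 1 - r else r)%:C%C) - ket1 R =
          diag_mx (map_mx (real_complex R) (\row_a (if a == 0 then 1 - r else r - 1))).
  apply/matrixP => a b; rewrite !mxE.
  case: a b => [[|[|//]] ?] [[|[|//]] ?]; rewrite /= ?mulr1n ?mulr0n ?subr0 ?subrr //.
  by rewrite rmorphB.
by have := is_trnorm_diag (\row_(a < 2) (if a == 0 then 1 - r else r - 1));
  rewrite big_ord_recl big_ord1 !mxE.
Qed.

Lemma measure_prepare_piM (tau : 'M[C]_n) : effect A -> density tau ->
  0 < complex.Re (\tr (A *m tau)) ->
  measure_prepare tau = piM (complex.Re (\tr (A *m tau)))^-1.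
Proof.
move=> hA htau; have /= -> := measure_prepare_density hA htau.
by move=> t0; rewrite /piM invrK.
Qed.

End MeasurePrepare.

Section ChannelEffect.
Variable R : realType.
Local Notation C := R[i].

Lemma mxtrace2 (M : 'M[C]_2) : \tr M = M 0 0 + M 1 1.
Proof. by rewrite /mxtrace big_ord_recl big_ord1 (_ : lift 0 0 = 1) //; exact: val_inj. Qed.

Variables (n : nat) (F : {linear 'M[C]_n -> 'M[C]_2}).

Definition channel_effect : 'M[C]_n := \matrix_(c, d) F (delta_mx d c) 1 1.

Lemma mxtrace_mul_channel_effect (X : 'M[C]_n) : \tr (X *m channel_effect) = F X 1 1.
Proof.
rewrite [in RHS](matrix_sum_delta X) linear_sum summxE /mxtrace.
apply: eq_bigr => c _; rewrite linear_sum summxE mxE.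
by apply: eq_bigr => d _; rewrite linearZ !mxE.
Qed.

Lemma channel_effect_effect : CPTP F -> effect channel_effect.
Proof.
move=> [hCP hTP]; have F_ge0 (v : 'cV[C]_n) a : 0 <= F (v *m adj v) a a.
  by apply/psd_diag_ge0/cp_psd => //; exact: psd_rank1.
split; apply/psdP => v; rewrite sform_trace.
  by rewrite mxtrace_mul_channel_effect.
rewrite mulmxBr mulmx1 mxtraceD raddfN /= mxtrace_mul_channel_effect -hTP mxtrace2.
by rewrite addrK.
Qed.

End ChannelEffect.

Section ThresholdSupremum.
Variable R : realType.
Variables (m : \bar R) (feasible : set R).
Hypothesis feasible_large : forall K, 1 < K -> (m < (K^-1)%:E)%E -> feasible K.

Let S := [set 1%E] `|` [set K%:E | K in feasible].

Lemma lnE_sup_threshold_eq0 : m = 0%E -> lnE (ereal_sup S) = +oo%E.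
Proof.
move=> m0; suff -> : ereal_sup S = +oo%E by [].
apply/eqyP => A A0; apply: (@le_trans _ _ (A + 1)%:E); first by rewrite lee_fin lerDl.
apply: ereal_sup_ubound; right; exists (A + 1) => //; apply: feasible_large.
  by rewrite ltrDr.
by rewrite m0 lte_fin invr_gt0 addr_gt0.
Qed.

Hypotheses (m_le1 : (m <= 1)%E)
  (feasible_bound : forall K, feasible K -> (m <= (K^-1)%:E)%E).

Lemma lnE_sup_threshold_gt0 : (0 < m)%E -> lnE (ereal_sup S) = (- ln (fine m))%:E.
Proof.
move=> m0; have mfin : m \is a fin_num.
  by rewrite ge0_fin_numE ?ltW // (le_lt_trans m_le1) ?ltry.
set mr := fine m; have mE : m = mr%:E by rewrite fineK.
have mr0 : 0 < mr by rewrite -lte_fin -mE.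
have mr1 : mr <= 1 by rewrite -lee_fin -mE.
suff -> : ereal_sup S = (mr^-1)%:E by rewrite /lnE lnV ?posrE.
have S1 : (1 <= ereal_sup S)%E by apply: ereal_sup_ubound; left.
have S_le : (ereal_sup S <= (mr^-1)%:E)%E.
  apply: ge_ereal_sup => _ [-> | [K hK <-]]; first by rewrite lee_fin invf_ge1.
  have := feasible_bound hK; rewrite mE lee_fin => mrK.
  have K0 : 0 < K by rewrite -invr_gt0 (lt_le_trans mr0).
  by rewrite lee_fin -[K]invrK lef_pV2 ?posrE ?invr_gt0.
have [r rE] : exists r, ereal_sup S = r%:E.
  exists (fine (ereal_sup S)); rewrite fineK // ge0_fin_numE ?(le_trans _ S1) //.
  exact: le_lt_trans S_le (ltry _).
rewrite rE lee_fin in S1; apply/eqP; rewrite eq_le S_le rE lee_fin leNgt.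
apply/negP => /midf_lt[]; move: ((r + _) / 2) => z rz zm.
have : (z%:E <= ereal_sup S)%E.
  have z1 : 1 < z by exact: le_lt_trans S1 rz.
  apply: ereal_sup_ubound; right; exists z => //; apply: feasible_large => //.
  by rewrite mE lte_fin -[mr]invrK ltf_pV2 ?posrE ?invr_gt0 // (lt_trans ltr01).
by rewrite rE lee_fin leNgt rz.
Qed.

End ThresholdSupremum.

Section Feasibility.
Variable R : realType.
Local Notation C := R[i].
Variables (n : nat) (Ps Es : set 'M[C]_n) (eps : R).
Hypotheses (hPs : Ps `<=` @density R n) (hEs : Es `<=` @density R n).

Lemma supTr_ge0 E : (0 <= supTr Es E)%E.
Proof. by apply: ereal_sup_ubound; left. Qed.

Lemma supTr_ub E tau : Es tau -> ((complex.Re (\tr (tau *m E)))%:E <= supTr Es E)%E.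
Proof. by move=> htau; apply: ereal_sup_ubound; right; exists tau. Qed.

Lemma gpo_feasible_effect M : gpo_feasible Ps Es eps M ->
  exists2 E, Dmin_feasible Ps eps E & (supTr Es E <= (M^-1)%:E)%E.
Proof.
move=> [M1 [F [hF hP hE]]]; have M0 : 0 < M by exact: lt_trans M1.
exists (channel_effect F); first split; first exact: channel_effect_effect.
  move=> rho /[dup] /hPs [_ tr1] /hP [t [ht t_eps]].
  have F00 : F rho 0 0 = 1 - F rho 1 1 by rewrite -tr1 -hF.2 mxtrace2 addrK.
  have := is_trnorm_ge_diag_sub ht; rewrite !mxE /= F00.
  rewrite mulmxBr mulmx1 mxtraceD raddfN /= tr1 mxtrace_mul_channel_effect.
  by case: (F rho 1 1) => a b /=; lra.
apply: ge_ereal_sup => _ [-> | [tau htau <-]].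
  by rewrite lee_fin invr_ge0 ltW.
rewrite mxtrace_mul_channel_effect; have [M' [MM' ->]] := hE tau htau.
by rewrite /piM !mxE /= lee_fin lef_pV2 ?posrE // (lt_le_trans M0).
Qed.

Lemma effect_gpo_feasible E M s : Dmin_feasible Ps eps E -> 1 < M ->
  0 <= s -> s < M^-1 -> (forall tau, Es tau -> complex.Re (\tr (E *m tau)) <= s) ->
  gpo_feasible Ps Es eps M.
Proof.
move=> [hE hEP] M1 s0 sM hs; have M0 : 0 < M by exact: lt_trans M1.
have Mi1 : M^-1 < 1 by rewrite invf_lt1.
(* mixing in the identity with weight [c] keeps the charge probability
   positive on [Es] while staying below [1/M] *)
pose c := M^-1 - s.
have c0 : 0 < c by rewrite /c subr_gt0.
have c1 : c <= 1 by rewrite /c lerBlDr (le_trans (ltW Mi1)) // lerDl.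
pose A := (1 - c)%:C%C *: E + c%:C%C *: 1%:M.
have hA : effect A by apply: effect_mix; rewrite ?c1 ?ltW.
have trA X : density X ->
    complex.Re (\tr (A *m X)) = (1 - c) * complex.Re (\tr (E *m X)) + c.
  move=> [_ tr1]; rewrite mulmxDl -!scalemxAl mul1mx mxtraceD !mxtraceZ tr1.
  by case: (\tr (E *m X)) => a b /=; ring.
split=> //; exists (measure_prepare A); split; first exact: measure_prepare_cptp.
  move=> rho /[dup] /hPs hrho /hEP; rewrite mulmxBr mulmx1 mxtraceD raddfN /=.
  rewrite hrho.2 mxtrace_mulC => rho_eps; apply: measure_prepare_trdist => //.
  have := mxtrace_effect_density_le1 hE hrho; rewrite trA //.
  move: rho_eps; case: (\tr (E *m rho)) => a b /= ha a1.
  have : 0 <= c * (1 - a) by apply: mulr_ge0; lra.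
  lra.
move=> tau /[dup] /hEs htau /hs x_s.
have x0 : 0 <= complex.Re (\tr (E *m tau)).
  have := mxtrace_psd_mul_ge0 hE.1 htau.1.
  by rewrite {1}(mxtrace_psd_mul_real hE.1 htau.1) ler0c.
have := mulr_ge0 (ltW c0) s0; have := mulr_ge0 (ltW c0) x0.
have t0 : 0 < complex.Re (\tr (A *m tau)) by rewrite trA //; nra.
exists (complex.Re (\tr (A *m tau)))^-1; split; last exact: measure_prepare_piM.
rewrite -[M]invrK lef_pV2 ?posrE ?invr_gt0 // trA // -[M^-1](subrK s) -/c.
nra.
Qed.

Definition min_type2_error := ereal_inf [set supTr Es E | E in Dmin_feasible Ps eps].

Lemma min_type2_error_ge0 : (0 <= min_type2_error)%E.
Proof. by apply: le_ereal_inf_tmp => _ [E _ <-]; exact: supTr_ge0. Qed.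

Lemma min_type2_error_le1 : 0 <= eps -> (min_type2_error <= 1)%E.
Proof.
move=> eps0; apply: ge_ereal_inf; exists (supTr Es 1%:M).
  exists 1%:M => //; split; last by move=> rho _; rewrite subrr mulmx0 mxtrace0.
  split; first exact: psd1.
  by rewrite subrr; apply/psdP => v; rewrite /sform mulmx0 mul0mx mxE.
rewrite /supTr; apply: ge_ereal_sup => _ [-> | [tau /hEs [_ tr1] <-]]; first by rewrite lee_fin.
rewrite mulmx1 tr1 lee_fin; exact: lexx.
Qed.

Lemma gpo_feasible_large M : 1 < M -> (min_type2_error < (M^-1)%:E)%E ->
  gpo_feasible Ps Es eps M.
Proof.
move=> M1 /ereal_inf_lt[_ [E hE <-] hsup].
have sfin : supTr Es E \is a fin_num.
  by rewrite ge0_fin_numE ?supTr_ge0 // (lt_trans hsup) ?ltry.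
apply: (effect_gpo_feasible (s := fine (supTr Es E)) hE M1).
- by rewrite -lee_fin fineK ?supTr_ge0.
- by rewrite -lte_fin fineK.
- by move=> tau htau; rewrite mxtrace_mulC -lee_fin fineK ?supTr_ub.
Qed.

Lemma gpo_feasible_bound M : gpo_feasible Ps Es eps M ->
  (min_type2_error <= (M^-1)%:E)%E.
Proof.
move=> /gpo_feasible_effect[E hE hle].
by apply: ge_ereal_inf; exists (supTr Es E) => //; exists E.
Qed.

End Feasibility.

Theorem theorem6 (R : realType) (n : nat) (eps : R)
  (Ps Es : set 'M[R[i]]_n)
  (heps0 : 0 <= eps) (heps1 : eps < 1)
  (hPs : Ps `<=` @density R n) (hEs : Es `<=` @density R n) :
  betaW_GPO Ps Es eps = Dmin Ps Es eps.
Proof.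
rewrite /betaW_GPO /Dmin -/(min_type2_error Ps Es eps).
have large := gpo_feasible_large hPs hEs (eps := eps).
case: ifPn => [/eqP m0 | m_neq0]; first exact: lnE_sup_threshold_eq0 large m0.
apply: lnE_sup_threshold_gt0 => //.
- exact: min_type2_error_le1.
- exact: gpo_feasible_bound.
- by rewrite lt0e m_neq0 min_type2_error_ge0.
Qed.
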